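(* Let $n \ge 2$, let $\lambda_1,\ldots,\lambda_n \in \mathbb{C}$, let $F$ be the $n$-by-$n$ discrete Fourier transform matrix, i.e. $f_{ij} = \omega^{(i-1)(j-1)}/\sqrt{n}$ with $\omega := \exp(-2\pi i/n)$, let $D = \operatorname{diag}(\lambda_1,\ldots,\lambda_n)$, and let $A = FDF^\ast$. Then for each $k \in \{1,\ldots,n\}$, the field of values $F(A_{(k)})$ is inscribed in the polygon $\partial \operatorname{co}(\lambda_1,\ldots,\lambda_n)$, and the points of tangency (the points where $F(A_{(k)})$ meets the sides of this polygon) occur at the midpoints of the sides of $\partial\operatorname{co}(\lambda_1,\ldots,\lambda_n)$.
   Context: For $B \in \mathsf{M}_m(\mathbb{C})$, the field of values is $F(B) = \{x^\ast B x : x \in \mathbb{C}^m,\ x^\ast x = 1\}$. $A_{(k)}$ denotes the $(n-1)$-by-$(n-1)$ principal submatrix of $A$ obtained by deleting its $k$th row and column. $\operatorname{co}$ denotes convex hull. Label the vertices of the convex polygon $\operatorname{co}(\lambda_1,\ldots,\lambda_n)$ consecutively along its boundary as $\mu_1,\ldots,\mu_d$, so that its sides are $\operatorname{co}(\mu_j,\mu_{j+1})$, $j=1,\ldots,d$, with $\mu_{d+1} := \mu_1$. A set $G$ is inscribed in the polygon if $G \cap \operatorname{co}(\mu_j,\mu_{j+1}) \neq \emptyset$ for all $j \in \{1,\ldots,d\}$. *)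

From HB Require Import structures.
From mathcomp Require Import all_boot all_order all_algebra.
From mathcomp Require Import reals trigo.
From mathcomp Require Import complex.
Set Implicit Arguments. Unset Strict Implicit. Unset Printing Implicit Defensive.
Import Order.TTheory GRing.Theory Num.Theory.
Local Open Scope ring_scope.

Section Defs.
Variable R : realType.
Local Notation C := R[i].

Definition ctrmx {m p : nat} (B : 'M[C]_(m, p)) : 'M[C]_(p, m) :=
  (map_mx Num.conj B)^T.

Definition field_of_values {m : nat} (B : 'M[C]_m) (z : C) : Prop :=
  exists x : 'cV[C]_m, ctrmx x *m x = 1%:M /\ ctrmx x *m B *m x = z%:M.

Definition delete_rc {n : nat} (A : 'M[C]_n) (k : 'I_n) : 'M[C]_n.-1 :=
  row' k (col' k A).

(* omega = exp(-2 pi i / n) = cos(2pi/n) - i sin(2pi/n) *)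
Definition dft_omega (n : nat) : C :=
  Complex (cos (2 * pi / n%:R)) (- sin (2 * pi / n%:R)).

(* DFT matrix, 0-based indices: f_ij = omega^(i j) / sqrt n *)
Definition dft_matrix (n : nat) : 'M[C]_n :=
  \matrix_(i < n, j < n) (dft_omega n ^+ (i * j) / Complex (Num.sqrt (n%:R : R)) 0).

Definition co {m : nat} (p : 'I_m -> C) (z : C) : Prop :=
  exists t : 'I_m -> C, (forall i, 0 <= t i) /\ \sum_i t i = 1 /\
                        z = \sum_i t i * p i.

Definition segment (mu nu : C) (z : C) : Prop :=
  exists t : C, 0 <= t <= 1 /\ z = (1 - t) * mu + t * nu.

Definition is_vertex {m : nat} (lam : 'I_m -> C) (mu : C) : Prop :=
  (exists i, lam i = mu) /\
  ~ (exists t : 'I_m -> C, (forall i, 0 <= t i) /\ \sum_i t i = 1 /\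
       (forall i, lam i = mu -> t i = 0) /\ mu = \sum_i t i * lam i).

(* co(mu, nu) is a side co(mu_j, mu_{j+1}) of the polygon boundary: mu and nu are
   consecutive vertices, i.e. either the polygon is the single point mu = nu
   (d = 1), or mu <> nu are vertices and all lam_i lie in one closed half-plane
   bounded by the line through mu and nu. *)
Definition is_side {m : nat} (lam : 'I_m -> C) (mu nu : C) : Prop :=
  is_vertex lam mu /\ is_vertex lam nu /\
  (if mu == nu then forall i, lam i = mu
   else (forall i, 0 <= 'Im ((lam i - mu) * Num.conj (nu - mu))) \/
        (forall i, 'Im ((lam i - mu) * Num.conj (nu - mu)) <= 0)).

Definition inscribed {m : nat} (lam : 'I_m -> C) (G : C -> Prop) : Prop :=
  forall mu nu, is_side lam mu nu -> exists z, G z /\ segment mu nu z.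

End Defs.

From HB Require Import structures.
From mathcomp Require Import all_boot all_order all_algebra.
From mathcomp Require Import reals trigo.
From mathcomp Require Import complex.
From mathcomp Require Import ring lra.
Set Implicit Arguments. Unset Strict Implicit. Unset Printing Implicit Defensive.
Import Order.TTheory GRing.Theory Num.Theory.
Local Open Scope ring_scope.

(* For indices a <> b let y be supported on {a, b}, with y_a = w^(kb)/sqrt 2 and
   y_b = -w^(ka)/sqrt 2.  Then x = F y is a unit vector whose k-th entry vanishes,
   so deleting it gives a unit vector x' with
   x'^* A_(k) x' = x^* A x = y^* D y = (lam_a + lam_b)/2.
   Every side of the polygon joins two eigenvalues lam_a, lam_b with a <> b (they
   coincide when the polygon is a point), so its midpoint lies in F(A_(k)). *)

Lemma sum_expr_unity_root (F : idomainType) (n : nat) (r : F) :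
  r ^+ n = 1 -> \sum_(l < n) r ^+ l = if r == 1 then n%:R else 0.
Proof.
move=> rn1; have [->|r_neq1] := eqVneq r 1.
  by under eq_bigr do rewrite expr1n; rewrite sumr_const card_ord.
apply/eqP; have := subrX1 r n; rewrite rn1 subrr => /esym/eqP.
by rewrite mulf_eq0 subr_eq0 (negbTE r_neq1).
Qed.

Section DftOmega.
Variables (R : realType) (n : nat).
Hypothesis n_gt0 : (0 < n)%N.
Local Notation w := (dft_omega R n).
Local Notation theta := (2 * pi / n%:R : R).

Lemma dft_omega_expr m :
  w ^+ m = Complex (cos (m%:R * theta)) (- sin (m%:R * theta)).
Proof.
elim: m => [|m IH]; first by rewrite expr0 mul0r cos0 sin0 oppr0.
rewrite exprSr IH -[(_ +i* _)%C * (_ +i* _)%C]/(_ +i* _)%C.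
have -> : m.+1%:R * theta = m%:R * theta + theta by rewrite -natr1 mulrDl mul1r.
by rewrite cosD sinD; congr Complex; ring.
Qed.

Lemma dft_omega_prim_root : n.-primitive_root w.
Proof.
have n_neq0 : (n%:R : R) != 0 by rewrite pnatr_eq0 -lt0n.
rewrite /primitive_root_of_unity n_gt0; apply/forallP => -[m /= m_lt_n].
rewrite unity_rootE dft_omega_expr /=; have [m1n|m1_neq_n] := eqVneq m.+1 n.
  have -> : m.+1%:R * theta = pi *+ 2 by rewrite m1n -mulr_natl; field.
  by rewrite cos2pi sin2pi oppr0 eqxx.
(* cos x = 1 - 2 sin^2 (x/2) < 1, since 0 < x/2 < pi. *)
rewrite eqbF_neg; apply/eqP => -[cos1 _].
have m1_lt_n : (m.+1 < n)%N by rewrite ltn_neqAle m1_neq_n.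
set x := m.+1%:R * theta in cos1.
have sin_gt0 : 0 < sin (x / 2).
  apply: sin_gt0_pi; have pi_gt0 := pi_gt0 R.
  have -> : x / 2 = m.+1%:R / n%:R * pi by rewrite /x; field.
  rewrite mulr_gt0 ?divr_gt0 ?ltr0n //= gtr_pMl // ltr_pdivrMr ?ltr0n //.
  by rewrite mul1r ltr_nat.
have : sin (x / 2) ^+ 2 = 0.
  have x_half : x = (x / 2) *+ 2 by rewrite -mulr_natr mulfVK ?pnatr_eq0.
  by move: cos1; rewrite {1}x_half cos_mulr2n cos2sin2; lra.
by move/eqP; rewrite expf_eq0 /= gt_eqF.
Qed.

Lemma dft_omega_norm : `|w| = 1.
Proof.
apply/eqP; rewrite -(pexpr_eq1 n_gt0 (normr_ge0 _)) -normrX.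
by rewrite (prim_expr_order dft_omega_prim_root) normr1.
Qed.

End DftOmega.

Section ConjTranspose.
Variable R : realType.
Local Notation C := R[i].

Lemma ctrmxM p q r (M : 'M[C]_(p, q)) (N : 'M[C]_(q, r)) :
  ctrmx (M *m N) = ctrmx N *m ctrmx M.
Proof. by rewrite /ctrmx map_mxM trmx_mul. Qed.

Lemma ctrmxE p q (M : 'M[C]_(p, q)) i j : ctrmx M i j = Num.conj (M j i).
Proof. by rewrite !mxE. Qed.

Lemma unitary_conj_quad p (U : 'M[C]_p) (D : 'M[C]_p) (y : 'cV[C]_p) :
  ctrmx U *m U = 1%:M ->
  ctrmx (U *m y) *m (U *m D *m ctrmx U) *m (U *m y) = ctrmx y *m D *m y.
Proof.
move=> unitU; rewrite ctrmxM !mulmxA -(mulmxA _ (ctrmx U)) unitU mulmx1.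
by rewrite -(mulmxA _ (ctrmx U)) unitU mulmx1.
Qed.

Lemma unitary_conj_norm p (U : 'M[C]_p) (y : 'cV[C]_p) :
  ctrmx U *m U = 1%:M -> ctrmx (U *m y) *m (U *m y) = ctrmx y *m y.
Proof. by move=> unitU; rewrite ctrmxM mulmxA -(mulmxA _ (ctrmx U)) unitU mulmx1. Qed.

End ConjTranspose.

Section DftMatrix.
Variables (R : realType) (n : nat).
Hypothesis n_gt0 : (0 < n)%N.
Local Notation w := (dft_omega R n).
Local Notation scale := (Complex (Num.sqrt (n%:R : R)) 0).

Lemma dft_matrixE i j : dft_matrix R n i j = w ^+ (i * j) / scale.
Proof. by rewrite mxE. Qed.

Lemma dft_matrix_conjE i j :
  Num.conj (dft_matrix R n i j) = Num.conj (w ^+ j) ^+ i / scale.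
Proof.
rewrite mxE rmorphM fmorphV mulnC exprM rmorphXn /=.
by congr (_ * _^-1); exact: conjc_real.
Qed.

Lemma dft_scale_sqr : scale * scale = n%:R.
Proof.
rewrite -[Complex _ 0]/((Num.sqrt (n%:R : R))%:C)%C -rmorphM /=.
by rewrite -expr2 sqr_sqrtr ?ler0n // rmorph_nat.
Qed.

Lemma dft_matrix_unitary : ctrmx (dft_matrix R n) *m dft_matrix R n = 1%:M.
Proof.
have w_prim := dft_omega_prim_root R n_gt0.
have wX_unit m : w ^+ m * Num.conj (w ^+ m) = 1.
  by rewrite -normCK normrX dft_omega_norm // !expr1n.
apply/matrixP => i j; rewrite mxE [RHS]mxE.
set r := Num.conj (w ^+ i) * w ^+ j.
transitivity (\sum_(l < n) r ^+ l / n%:R).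
  apply: eq_bigr => l _; rewrite ctrmxE dft_matrix_conjE dft_matrixE.
  by rewrite mulrACA -invfM dft_scale_sqr exprMn -exprM mulnC.
have rn1 : r ^+ n = 1.
  rewrite exprMn -rmorphXn -!exprM (mulnC i) (mulnC j) !exprM.
  by rewrite (prim_expr_order w_prim) !expr1n rmorph1 mulr1.
have r1E : (r == 1) = (i == j).
  have wi_neq0 : w ^+ i != 0 by rewrite expf_neq0 // (prim_root_eq0 w_prim) -lt0n.
  rewrite -(inj_eq (mulfI wi_neq0)) mulrA wX_unit mul1r mulr1 eq_sym.
  by rewrite (eq_prim_root_expr w_prim) !modn_small.
rewrite -mulr_suml sum_expr_unity_root // r1E.
by case: eqP => _; rewrite ?mul0r // mulfV // pnatr_eq0 -lt0n.
Qed.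
End DftMatrix.

Section DeleteRowCol.
Variables (R : realType) (n : nat) (k : 'I_n).
Local Notation C := R[i].

Lemma row'_norm (x : 'cV[C]_n) :
  x k 0 = 0 -> ctrmx (row' k x) *m row' k x = ctrmx x *m x.
Proof.
move=> xk0; apply/matrixP => i j; rewrite !ord1 !mxE (bigD1_ord k) //= !mxE xk0 mulr0 add0r.
by apply: eq_bigr => l _; rewrite !mxE.
Qed.

Lemma delete_rc_quad (M : 'M[C]_n) (x : 'cV[C]_n) : x k 0 = 0 ->
  ctrmx (row' k x) *m delete_rc M k *m row' k x = ctrmx x *m M *m x.
Proof.
move=> xk0; apply/matrixP => i j; rewrite !ord1 !mxE (bigD1_ord k) //= xk0 mulr0 add0r.
apply: eq_bigr => l _; rewrite !mxE (bigD1_ord k) //= !mxE xk0 conjC0 mul0r add0r.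
by congr (_ * _); apply: eq_bigr => l' _; rewrite !mxE.
Qed.

Lemma field_of_values_delete_rc (M : 'M[C]_n) (x : 'cV[C]_n) :
  x k 0 = 0 -> ctrmx x *m x = 1%:M ->
  field_of_values (delete_rc M k) ((ctrmx x *m M *m x) 0 0).
Proof.
move=> xk0 x_unit; exists (row' k x).
by rewrite row'_norm // delete_rc_quad //; split=> //; exact: mx11_scalar.
Qed.

End DeleteRowCol.

Section PairVector.
Variables (R : realType) (n : nat) (a b : 'I_n) (alpha beta : R[i]).
Hypothesis a_neq_b : a != b.

Definition pair_vec : 'cV[R[i]]_n :=
  \col_j (if j == a then alpha else if j == b then beta else 0).

Lemma sum_pair (f : 'I_n -> R[i]) :
  (forall j, j != a -> j != b -> f j = 0) -> \sum_j f j = f a + f b.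
Proof.
move=> f0; rewrite (bigD1 a) //= (bigD1 b) 1?eq_sym //= big1 ?addr0 ?addrA //.
by move=> j /andP[ja jb]; apply: f0.
Qed.

Lemma mulmx_pair_vec m (M : 'M[R[i]]_(m, n)) i :
  (M *m pair_vec) i 0 = M i a * alpha + M i b * beta.
Proof.
rewrite mxE (sum_pair _) => [|j ja jb]; last by rewrite !mxE (negbTE ja) (negbTE jb) mulr0.
by rewrite !mxE eqxx eq_sym (negbTE a_neq_b) eqxx.
Qed.

Lemma pair_vec_norm :
  ctrmx pair_vec *m pair_vec = (`|alpha| ^+ 2 + `|beta| ^+ 2)%:M.
Proof.
apply/matrixP => i j; rewrite !ord1 mulmx_pair_vec !mxE eqxx eq_sym (negbTE a_neq_b) eqxx.
by rewrite mulr1n !normCK ![_^* * _]mulrC.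
Qed.

Lemma pair_vec_diag_quad (d : 'rV[R[i]]_n) :
  ctrmx pair_vec *m diag_mx d *m pair_vec =
  (`|alpha| ^+ 2 * d 0 a + `|beta| ^+ 2 * d 0 b)%:M.
Proof.
apply/matrixP => i j; rewrite !ord1 mulmx_pair_vec mul_mx_diag !mxE eqxx.
by rewrite eq_sym (negbTE a_neq_b) eqxx mulr1n !normCK; ring.
Qed.

End PairVector.

Lemma field_of_values_delete_rc_unitary (R : realType) (n : nat)
    (U : 'M[R[i]]_n) (d : 'rV[R[i]]_n) (k a b : 'I_n) (alpha beta : R[i]) :
  ctrmx U *m U = 1%:M -> a != b -> U k a * alpha + U k b * beta = 0 ->
  `|alpha| ^+ 2 + `|beta| ^+ 2 = 1 ->
  field_of_values (delete_rc (U *m diag_mx d *m ctrmx U) k)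
                  (`|alpha| ^+ 2 * d 0 a + `|beta| ^+ 2 * d 0 b).
Proof.
move=> U_unitary a_neq_b Uk0 norm1; set x := U *m pair_vec a b alpha beta.
have xk0 : x k 0 = 0 by rewrite mulmx_pair_vec.
have x_unit : ctrmx x *m x = 1%:M.
  by rewrite unitary_conj_norm // pair_vec_norm // norm1.
have := field_of_values_delete_rc (U *m diag_mx d *m ctrmx U) xk0 x_unit.
by rewrite unitary_conj_quad // pair_vec_diag_quad // mxE eqxx mulr1n.
Qed.

Lemma dft_midpoint_field_of_values (R : realType) (n : nat) (lam : 'I_n -> R[i])
    (k a b : 'I_n) :
  (0 < n)%N -> a != b ->
  field_of_values
    (delete_rc (dft_matrix R n *m diag_mx (\row_i lam i) *m ctrmx (dft_matrix R n)) k)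
    ((lam a + lam b) / 2).
Proof.
move=> n_gt0 a_neq_b; set w := dft_omega R n; set u : R[i] := sqrtC 2^-1.
have normX_u m : `|w ^+ m * u| ^+ 2 = 2^-1.
  rewrite normrM normrX dft_omega_norm // expr1n mul1r ger0_norm ?sqrtC_ge0 ?invr_ge0 ?ler0n //.
  exact: sqrtCK.
have -> : (lam a + lam b) / 2 =
    2^-1 * (\row_i lam i) 0 a + 2^-1 * (\row_i lam i) 0 b.
  by rewrite !mxE mulrC mulrDr.
rewrite -{1}(normX_u (k * b)%N) -(normX_u (k * a)%N) -normrN.
apply: field_of_values_delete_rc_unitary (dft_matrix_unitary R n_gt0) a_neq_b _ _.
  by rewrite !dft_matrixE; ring.
by rewrite normrN !normX_u [RHS](splitr 1) div1r.
Qed.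

Lemma segment_midpoint (R : realType) (mu nu : R[i]) : segment mu nu ((mu + nu) / 2).
Proof.
exists 2^-1; split; last by field.
by rewrite invr_ge0 ler0n /= invf_le1 ?ltr0n // ler1n.
Qed.

Lemma is_side_endpoints (R : realType) (n : nat) (lam : 'I_n -> R[i]) (mu nu : R[i]) :
  (1 < n)%N -> is_side lam mu nu ->
  exists a b, [/\ a != b, lam a = mu & lam b = nu].
Proof.
move=> n_gt1 [[[a <-] _] [[[b <-] _] side]].
have [lam_ab|lam_ab] := eqVneq (lam a) (lam b).
  have n1_gt0 : (0 < n.-1)%N by rewrite -subn1 subn_gt0.
  rewrite lam_ab eqxx in side.
  by exists a, (lift a (Ordinal n1_gt0)); rewrite neq_lift side.
by exists a, b; split=> //; apply: contraNneq lam_ab => ->.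
Qed.

Theorem mainTheorem4 (R : realType) (n : nat) (lam : 'I_n -> R[i]) :
  (2 <= n)%N ->
  let F := dft_matrix R n in
  let A := F *m diag_mx (\row_i lam i) *m ctrmx F in
  forall k : 'I_n,
    inscribed lam (field_of_values (delete_rc A k)) /\
    (forall mu nu, is_side lam mu nu ->
       field_of_values (delete_rc A k) ((mu + nu) / 2)).
Proof.
move=> n_ge2 F A k.
have midpoint mu nu : is_side lam mu nu -> field_of_values (delete_rc A k) ((mu + nu) / 2).
  case/(is_side_endpoints n_ge2) => a [b [a_neq_b <- <-]].
  exact: dft_midpoint_field_of_values (ltnW n_ge2) a_neq_b.
split=> // mu nu side; exists ((mu + nu) / 2).
by split; [exact: midpoint | exact: segment_midpoint].
Qed.
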